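(* Let $Q\in\mathbb{S}^n$ with $Q_i>0$ for all $i$, and let $\widehat{P}\in\mathbb{S}^n$. Suppose the indices can be labeled so that $\frac{\widehat{P}_\ell}{Q_\ell}<\frac{\widehat{P}_k}{Q_k}\le\frac{\widehat{P}_i}{Q_i}$ for all $i\neq\ell$ (i.e. $\ell$ is the unique index minimizing $\widehat{P}_i/Q_i$ and $k$ attains the second smallest ratio). Then for every $\alpha\in[0,1)$ with $$1-\widehat{P}_\ell-\frac{\widehat{P}_k}{Q_k}(1-Q_\ell)\ \le\ \alpha\ \le\ \kappa(\widehat{P}\,\|\,Q),$$ the vector $$P^*_i=\begin{cases}\dfrac{Q_i\left(1-\frac{\widehat{P}_\ell}{1-\alpha}\right)}{1-Q_\ell}, & i\neq\ell,\\[2mm] \dfrac{\widehat{P}_\ell}{1-\alpha}, & i=\ell,\end{cases}$$ is the unique solution of the optimization problem $$\min_{P\in\mathbb{S}^n}\ \sum_iP_i\log\frac{P_i}{Q_i}\quad\text{subject to}\quad P_i\le\frac{\widehat{P}_i}{1-\alpha},\ i=1,\dots,n.$$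
   Context: $\mathbb{S}^n=\{P\in\mathbb{R}^n:\sum_iP_i=1,\ P_i\ge0\}$. The separation distance is $\kappa(\widehat{P}\|Q)=\max_{i}\left(1-\frac{\widehat{P}_i}{Q_i}\right)$, which here equals $1-\widehat{P}_\ell/Q_\ell$. *)

From HB Require Import structures.
From mathcomp Require Import all_boot all_order all_algebra.
From mathcomp Require Import all_classical all_reals all_analysis.
Set Implicit Arguments. Unset Strict Implicit. Unset Printing Implicit Defensive.
Import Order.TTheory GRing.Theory Num.Theory.
Local Open Scope ring_scope.

Definition simplex {R : realType} (n : nat) (P : 'I_n -> R) : Prop :=
  (forall i, 0 <= P i) /\ \sum_(i < n) P i = 1.

(* KL divergence sum_i P_i log (P_i/Q_i); with 0 * ln _ = 0 this realises 0 log 0 = 0 *)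
Definition KL {R : realType} (n : nat) (P Q : 'I_n -> R) : R :=
  \sum_(i < n) P i * ln (P i / Q i).

(* separation distance kappa(P||Q) = max_i (1 - P_i/Q_i).  The neutral element 0
   is harmless for P, Q in the simplex (the max is then >= 0). *)
Definition kappa {R : realType} (n : nat) (P Q : 'I_n -> R) : R :=
  \big[Num.max/0]_(i < n) (1 - P i / Q i).

Definition feasible {R : realType} (n : nat) (Phat : 'I_n -> R) (alpha : R)
  (P : 'I_n -> R) : Prop :=
  simplex P /\ forall i, P i <= Phat i / (1 - alpha).

Definition unique_minimizer {R : realType} (n : nat) (Phat Q : 'I_n -> R)
  (alpha : R) (Pstar : 'I_n -> R) : Prop :=
  feasible Phat alpha Pstar /\
  forall P, feasible Phat alpha P -> P <> Pstar -> KL Pstar Q < KL P Q.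

(* The objective KL(. || Q) is strictly convex, so a feasible point at which its
   directional derivative sum_i (ln (P*_i / Q_i) + 1) (P_i - P*_i) towards every
   feasible P is nonnegative is the unique minimiser.  For P* = "mass c at l,
   the rest distributed proportionally to Q" this derivative equals
   (ln (c / Q_l) - ln ((1 - c) / (1 - Q_l))) (P_l - c), which is nonnegative as soon
   as c <= Q_l and P_l <= c.  The hypotheses on alpha say exactly that
   c = Phat_l / (1 - alpha) <= Q_l (upper bound, via kappa) and that P* respects the
   constraints at the indices i <> l (lower bound, via the second smallest ratio). *)

From HB Require Import structures.
From mathcomp Require Import all_boot all_order all_algebra.
From mathcomp Require Import all_classical all_reals all_analysis.
From mathcomp Require Import ring lra.
Set Implicit Arguments. Unset Strict Implicit. Unset Printing Implicit Defensive.
Import Order.TTheory GRing.Theory Num.Theory.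
Local Open Scope ring_scope.

Lemma ln_lt_subr1 (R : realType) (x : R) : 0 < x -> x != 1 -> ln x < x - 1.
Proof.
move=> x0 x1; rewrite ltrBrDl -[X in _ < X](lnK (x:=x)) ?posrE //.
by apply: expR_gt1Dx; rewrite ln_eq0.
Qed.

Lemma mul_ln_div_lt (R : realType) (p r : R) :
  0 < p -> 0 < r -> p != r -> p * ln (r / p) < r - p.
Proof.
move=> p0 r0 pr.
have rp1 : r / p != 1.
  by apply: contra pr => /eqP rp; rewrite -(divfK (x:=p) _ r) ?rp ?mul1r // gt_eqF.
have := ln_lt_subr1 (divr_gt0 r0 p0) rp1.
rewrite -(ltr_pM2l p0) => /lt_le_trans; apply.
by rewrite mulrBr mulrCA divff ?gt_eqF // !mulr1.
Qed.

Section XlnxTangent.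
Variables (R : realType) (q : R).
Hypothesis q_gt0 : 0 < q.

Lemma xlnx_tangent_lt (p r : R) : 0 <= p -> 0 < r -> p != r ->
  (ln (r / q) + 1) * (p - r) < p * ln (p / q) - r * ln (r / q).
Proof.
move=> p0 r0 pr; have [->|pn0] := eqVneq p 0; first by rewrite !mul0r; lra.
have p_gt0 : 0 < p by rewrite lt_def pn0.
have := mul_ln_div_lt p_gt0 r0 pr.
rewrite !ln_div ?posrE //; lra.
Qed.

(* Since ln 0 = 0, the tangent at r = 0 is meaningless unless p = 0 too. *)
Lemma xlnx_tangent_le (p r : R) : 0 <= p -> 0 <= r -> (r = 0 -> p = 0) ->
  (ln (r / q) + 1) * (p - r) <= p * ln (p / q) - r * ln (r / q).
Proof.
move=> p0 r0 rp; have [r_eq0|rn0] := eqVneq r 0.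
  by rewrite (rp r_eq0) r_eq0 subrr mulr0 mul0r subrr.
have [->|pr] := eqVneq p r; first by rewrite !subrr mulr0.
by apply/ltW/xlnx_tangent_lt; rewrite // lt_def rn0.
Qed.

End XlnxTangent.

Lemma KL_lt_of_first_order (R : realType) (n : nat) (Q P Ps : 'I_n -> R) :
  (forall i, 0 < Q i) -> (forall i, 0 <= P i) -> (forall i, 0 <= Ps i) ->
  (forall i, Ps i = 0 -> P i = 0) ->
  0 <= \sum_(i < n) (ln (Ps i / Q i) + 1) * (P i - Ps i) ->
  P <> Ps -> KL Ps Q < KL P Q.
Proof.
move=> Qpos P0 Ps0 Ps_supp deriv_ge0 PnPs.
have [j Pj] : exists j, P j != Ps j.
  apply/existsP; apply: contra_notT PnPs => /existsPn PeqPs.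
  by apply/funext => i; apply/eqP; rewrite -[_ == _]negbK PeqPs.
have Psj_gt0 : 0 < Ps j.
  by rewrite lt_def Ps0 andbT; apply: contraNN Pj => /eqP Psj0; rewrite Psj0 Ps_supp.
rewrite /KL -subr_gt0 -sumrB; apply: le_lt_trans deriv_ge0 _.
rewrite (bigD1 j) //= [X in _ < X](bigD1 j) //=.
apply: ltr_leD (xlnx_tangent_lt (Qpos j) (P0 j) Psj_gt0 Pj) _.
by apply: ler_sum => i _; have := xlnx_tangent_le (Qpos i) (P0 i) (Ps0 i) (@Ps_supp i).
Qed.

Lemma simplex_sum_neq (R : realType) (n : nat) (P : 'I_n -> R) (l : 'I_n) :
  simplex P -> \sum_(i < n | i != l) P i = 1 - P l.
Proof. by case=> _; rewrite (bigD1 l) //= => <-; rewrite addrC addrK. Qed.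

Lemma simplex_lt1 (R : realType) (n : nat) (Q : 'I_n -> R) (l k : 'I_n) :
  simplex Q -> (forall i, 0 < Q i) -> k != l -> Q l < 1.
Proof.
move=> Qs Qpos kl; rewrite -subr_gt0 -(simplex_sum_neq l Qs).
rewrite (bigD1 k) //= ltr_pwDl //.
by apply: sumr_ge0 => i _; apply: ltW.
Qed.

Lemma min_ratio_le1 (R : realType) (n : nat) (P Q : 'I_n -> R) (r : R) :
  simplex P -> simplex Q -> (forall i, 0 < Q i) -> (forall i, r <= P i / Q i) ->
  r <= 1.
Proof.
move=> [_ P1] [_ Q1] Qpos rP.
rewrite -[r]mulr1 -{1}Q1 -P1 mulr_sumr; apply: ler_sum => i _.
by rewrite -ler_pdivlMr // mulrC.
Qed.

Lemma kappa_le (R : realType) (n : nat) (P Q : 'I_n -> R) (r : R) :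
  r <= 1 -> (forall i, r <= P i / Q i) -> kappa P Q <= 1 - r.
Proof.
move=> r1 rP; apply: (big_ind (fun x => x <= 1 - r)) => [|x y|i _].
- by rewrite subr_ge0.
- by move=> ? ?; rewrite ge_max; apply/andP.
- by rewrite lerD2l lerN2.
Qed.

Definition pinned (R : realType) (n : nat) (Q : 'I_n -> R) (l : 'I_n) (c : R) :
  'I_n -> R :=
  fun i => if i == l then c else Q i * (1 - c) / (1 - Q l).

Section Pinned.
Variables (R : realType) (n : nat) (Q : 'I_n -> R) (l : 'I_n) (c : R).
Hypotheses (Qs : simplex Q) (Qpos : forall i, 0 < Q i) (Ql_lt1 : Q l < 1).
Hypotheses (c_ge0 : 0 <= c) (c_le_Ql : c <= Q l).

Let Ps := pinned Q l c.

Lemma pinned_gt0 i : i != l -> 0 < Ps i.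
Proof.
move=> il; rewrite /Ps /pinned (negbTE il) divr_gt0 ?mulr_gt0 ?subr_gt0 //.
exact: le_lt_trans c_le_Ql Ql_lt1.
Qed.

Lemma pinned_ge0 i : 0 <= Ps i.
Proof.
by have [->|il] := eqVneq i l; [rewrite /Ps /pinned eqxx | apply/ltW/pinned_gt0].
Qed.

Lemma pinned_simplex : simplex Ps.
Proof.
split; first exact: pinned_ge0.
rewrite (bigD1 l) //= {1}/Ps /pinned eqxx.
rewrite (eq_bigr (fun i => Q i * ((1 - c) / (1 - Q l)))); last first.
  by move=> i il; rewrite /Ps /pinned (negbTE il) mulrA.
rewrite -mulr_suml (simplex_sum_neq l Qs) mulrC divfK ?subr_eq0 ?gt_eqF //.
by rewrite addrC subrK.
Qed.

Lemma pinned_first_order (P : 'I_n -> R) : simplex P -> P l <= c ->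
  0 <= \sum_(i < n) (ln (Ps i / Q i) + 1) * (P i - Ps i).
Proof.
move=> Psimp Plc.
set A := ln ((1 - c) / (1 - Q l)); set B := ln (c / Q l).
rewrite (bigD1 l) //= {1 2}/Ps /pinned eqxx -/B.
rewrite (eq_bigr (fun i => (A + 1) * (P i - Ps i))); last first.
  move=> i il; congr ((ln _ + 1) * _).
  by rewrite /Ps /pinned (negbTE il) mulrC !mulrA mulVf ?gt_eqF // mul1r.
rewrite -mulr_sumr sumrB (simplex_sum_neq l Psimp).
rewrite (simplex_sum_neq l pinned_simplex) /Ps /pinned eqxx.
have B_le0 : B <= 0 by apply: ln_le0; rewrite ler_pdivrMr // mul1r.
have A_ge0 : 0 <= A.
  by apply: ln_ge0; rewrite ler_pdivlMr ?mul1r ?subr_gt0 // lerD2l lerN2.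
have -> : (B + 1) * (P l - c) + (A + 1) * (1 - P l - (1 - c)) = (B - A) * (P l - c)
  by ring.
by apply: mulr_le0; lra.
Qed.

Lemma pinned_KL_lt (P : 'I_n -> R) : simplex P -> P l <= c -> P <> Ps ->
  KL Ps Q < KL P Q.
Proof.
move=> Psimp Plc; apply: KL_lt_of_first_order => //.
- by case: Psimp.
- exact: pinned_ge0.
- move=> i; have [->|il] := eqVneq i l.
    rewrite /Ps /pinned eqxx => c0; apply/le_anti/andP; split; first by rewrite -c0.
    by case: Psimp.
  by move=> Psi0; move: (pinned_gt0 il); rewrite -/Ps Psi0 ltxx.
- exact: pinned_first_order.
Qed.

End Pinned.

Lemma pinned_le_bound (R : realType) (n : nat) (Q Phat : 'I_n -> R) (l k : 'I_n)
  (alpha : R) i :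
  0 < Q i -> Q l < 1 -> alpha < 1 ->
  Phat k / Q k <= Phat i / Q i ->
  1 - Phat l - Phat k / Q k * (1 - Q l) <= alpha ->
  Q i * (1 - Phat l / (1 - alpha)) / (1 - Q l) <= Phat i / (1 - alpha).
Proof.
move=> Qi_gt0 Ql1 a1 hki hlow.
have a_gt0 : 0 < 1 - alpha by rewrite subr_gt0.
have Ql_gt0 : 0 < 1 - Q l by rewrite subr_gt0.
set w := Q i / ((1 - alpha) * (1 - Q l)).
have -> : Q i * (1 - Phat l / (1 - alpha)) / (1 - Q l) = w * (1 - alpha - Phat l).
  by rewrite /w; field; rewrite !gt_eqF.
have -> : Phat i / (1 - alpha) = w * (Phat i / Q i * (1 - Q l)).
  by rewrite /w; field; rewrite !gt_eqF.
apply: ler_wpM2l; first by rewrite ltW // divr_gt0 ?mulr_gt0.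
by have := ler_wpM2r (ltW Ql_gt0) hki; lra.
Qed.

Theorem theorem5 (R : realType) (n : nat) (Q Phat : 'I_n -> R) (l k : 'I_n)
  (alpha : R) :
  simplex Q -> (forall i, 0 < Q i) -> simplex Phat ->
  Phat l / Q l < Phat k / Q k ->
  (forall i, i != l -> Phat k / Q k <= Phat i / Q i) ->
  0 <= alpha -> alpha < 1 ->
  1 - Phat l - Phat k / Q k * (1 - Q l) <= alpha ->
  alpha <= kappa Phat Q ->
  unique_minimizer Phat Q alpha
    (fun i => if i == l then Phat l / (1 - alpha)
              else Q i * (1 - Phat l / (1 - alpha)) / (1 - Q l)).
Proof.
move=> Qs Qpos Phats hlk hk a0 a1 hlow hup.
have a_gt0 : 0 < 1 - alpha by rewrite subr_gt0.
have kl : k != l by apply: contraTneq hlk => ->; rewrite ltxx.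
have ratio_min i : Phat l / Q l <= Phat i / Q i.
  by have [->|il] := eqVneq i l; [exact: lexx | exact: le_trans (ltW hlk) (hk i il)].
have Ql_lt1 : Q l < 1 := simplex_lt1 Qs Qpos kl.
have c_ge0 : 0 <= Phat l / (1 - alpha) := divr_ge0 (proj1 Phats l) (ltW a_gt0).
have c_le_Ql : Phat l / (1 - alpha) <= Q l.
  rewrite ler_pdivrMr // mulrC -ler_pdivrMr ?Qpos //.
  have := le_trans hup (kappa_le (min_ratio_le1 Phats Qs Qpos ratio_min) ratio_min).
  lra.
split; first split.
- exact: pinned_simplex.
- move=> i; have [->|il] := eqVneq i l; first exact: lexx.
  exact: (pinned_le_bound (Qpos i) Ql_lt1 a1 (hk i il) hlow).
- by move=> P [Psimp Pb]; apply: pinned_KL_lt; rewrite ?Pb.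
Qed.
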